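(* Let $$A=\bigoplus_{i\in I}B(H_{\mathrm{in},i}),\quad B=\bigoplus_{j\in J}B(H_{\mathrm{out},j}),\quad C=\bigoplus_{k\in K}B(K_{\mathrm{in},k}),\quad D=\bigoplus_{l\in L}B(K_{\mathrm{out},l}),$$ and let $\mathcal S:\underline{\mathrm{Hom}}(A,B)\to\underline{\mathrm{Hom}}(C,D)$ be a deterministic supermap. Then there exists a unital completely positive map $\mathcal N:A\to C$ such that, for every positive $X\in\underline{\mathrm{Hom}}(A,B)$, $$\mathrm{Tr}_{\mathrm{out}}\big[\mathcal S(X)\big]=\mathcal N\big(\mathrm{Tr}_{\mathrm{out}}[X]\big).$$ Explicitly: - on the right, $\mathrm{Tr}_{\mathrm{out}}[X]=\big(\sum_{j\in J}\mathrm{Tr}_{H_{\mathrm{out},j}}X_{ji}\big)_{i\in I}\in A$; - on the left, $\mathrm{Tr}_{\mathrm{out}}[\mathcal S(X)]=\big(\sum_{l\in L}\mathrm{Tr}_{K_{\mathrm{out},l}}\mathcal S(X)_{lk}\big)_{k\in K}\in C$.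
   Context: Throughout, all Hilbert spaces are finite-dimensional and nonzero, and all index sets are finite and nonempty. **Multimatrix algebras.** A finite-dimensional $C^*$-algebra is written as $A=\bigoplus_{i\in I}B(H_i)$, with elements $X=(X_i)_{i\in I}$. Its trace is $\mathrm{Tr}(X)=\sum_i\mathrm{Tr}(X_i)$, and $X\ge 0$ means every block is positive semidefinite. **The algebra $\underline{\mathrm{Hom}}$ and (TP).** For $A=\bigoplus_{i\in I}B(H_i)$ and $B=\bigoplus_{j\in J}B(K_j)$, set $$\underline{\mathrm{Hom}}(A,B):=\bigoplus_{(j,i)\in J\times I}B(K_j\otimes H_i).$$ An element $X\in\underline{\mathrm{Hom}}(A,B)$ satisfies **(TP)** if $\sum_{j\in J}\mathrm{Tr}_{K_j}(X_{ji})=1_{H_i}$ for every $i\in I$. These positive (TP) elements are exactly the Choi operators of the channels (CPTP maps) $A\to B$. **Partial trace.** For $X\in\underline{\mathrm{Hom}}(A,B)$, define the partial trace over the output as $\mathrm{Tr}_{\mathrm{out}}[X]:=\big(\sum_{j}\mathrm{Tr}_{K_j}X_{ji}\big)_{i\in I}\in A$. **Deterministic supermaps.** A deterministic supermap is a completely positive linear map $\mathcal S:\underline{\mathrm{Hom}}(A,B)\to\underline{\mathrm{Hom}}(C,D)$ sending every positive element satisfying (TP) to an element satisfying (TP). *)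

From HB Require Import structures.
From mathcomp Require Import all_boot all_order all_algebra.
Set Implicit Arguments. Unset Strict Implicit. Unset Printing Implicit Defensive.
Import Order.TTheory GRing.Theory Num.Theory Num.Def.
Local Open Scope ring_scope.

Section Defs.
Variable F : numClosedFieldType.

Definition adjmx m n (M : 'M[F]_(m, n)) : 'M[F]_(n, m) := map_mx Num.conj M^T.

Definition psdmx n (M : 'M[F]_n) : Prop :=
  adjmx M = M /\ forall v : 'rV[F]_n, 0 <= (v *m M *m adjmx v) 0 0.

(* the multimatrix algebra  \bigoplus_{i in I} B(C^{d i}) *)
Definition mm (I : finType) (d : I -> nat) := forall i : I, 'M[F]_(d i).

Definition mm_pos (I : finType) (d : I -> nat) (X : mm d) : Prop :=
  forall i, psdmx (X i).

Definition mm_one (I : finType) (d : I -> nat) : mm d := fun i => 1%:M.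

Definition mm_linear (I J : finType) (dA : I -> nat) (dB : J -> nat)
  (f : mm dA -> mm dB) : Prop :=
  forall (a : F) (X Y : mm dA) (j : J),
    f (fun i => a *: X i + Y i) j = a *: f X j + f Y j.

(* tensor index: 'I_(m * n) ~ 'I_m * 'I_n (first factor major, Kronecker) *)
Definition unidx m n (r : 'I_(m * n)) : 'I_m * 'I_n :=
  enum_val (cast_ord (esym (mxvec_cast m n)) r).

(* viewing an element of M_n(A) = \bigoplus_i B(C^n (x) C^{d i})
   as an n x n block matrix with entries in A *)
Definition blk (I : finType) (d : I -> nat) n (X : mm (fun i => n * d i))
  (a b : 'I_n) : mm d :=
  fun i => \matrix_(p, q) X i (mxvec_index a p) (mxvec_index b q).

(* the amplification id_n (x) f : M_n(A) -> M_n(B) *)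
Definition ampl (I J : finType) (dA : I -> nat) (dB : J -> nat)
  (f : mm dA -> mm dB) n (X : mm (fun i => n * dA i)) : mm (fun j => n * dB j) :=
  fun j => \matrix_(r, s)
    f (blk X (unidx r).1 (unidx s).1) j (unidx r).2 (unidx s).2.

Definition mm_cp (I J : finType) (dA : I -> nat) (dB : J -> nat)
  (f : mm dA -> mm dB) : Prop :=
  forall n (X : mm (fun i => n * dA i)), mm_pos X -> mm_pos (ampl f X).

Definition mm_unital (I J : finType) (dA : I -> nat) (dB : J -> nat)
  (f : mm dA -> mm dB) : Prop :=
  forall j, f (mm_one dA) j = mm_one dB j.

(* dimensions of Hom(A, B) = \bigoplus_{(j,i)} B(K_j (x) H_i) *)
Definition homd (I J : finType) (dH : I -> nat) (dK : J -> nat) :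
  (J * I)%type -> nat := fun p => (dK p.1 * dH p.2)%N.

Definition ptrace1 m n (M : 'M[F]_(m * n)) : 'M[F]_n :=
  \matrix_(p, q) \sum_(a < m) M (mxvec_index a p) (mxvec_index a q).

Definition trout (I J : finType) (dH : I -> nat) (dK : J -> nat)
  (X : mm (homd dH dK)) : mm dH :=
  fun i => \sum_(j : J) (ptrace1 (X (j, i) : 'M[F]_(dK j * dH i)) : 'M[F]_(dH i)).

Definition tp (I J : finType) (dH : I -> nat) (dK : J -> nat)
  (X : mm (homd dH dK)) : Prop :=
  forall i, trout X i = 1%:M.

Definition det_supermap (I J K L : finType) (dHi : I -> nat) (dHo : J -> nat)
  (dKi : K -> nat) (dKo : L -> nat)
  (S : mm (homd dHi dHo) -> mm (homd dKi dKo)) : Prop :=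
  [/\ mm_linear S, mm_cp S &
      forall X, mm_pos X -> tp X -> tp (S X)].

End Defs.

(* Fix an output block j0 and embed A into Hom(A, B) by E(a) := a (x) |0><0|
   in the blocks (j0, i).  E is linear, completely positive and a right inverse
   of Tr_out, so N := Tr_out o S o E is linear, CP and unital.  To see that
   Tr_out S X only depends on a := Tr_out X for positive X, choose c > 0 with
   1 - c a >= 0 and put W := E(1 - c a): both c X + W and c E(a) + W are
   positive and satisfy (TP), hence so do their images under S, and linearity
   of Tr_out o S turns the equality of those images into Tr_out S X = Tr_out S E(a). *)
From HB Require Import structures.
From mathcomp Require Import all_boot all_order all_algebra.
From mathcomp Require Import ring.
From Stdlib Require Import FunctionalExtensionality.
Set Implicit Arguments. Unset Strict Implicit. Unset Printing Implicit Defensive.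
Import Order.TTheory GRing.Theory Num.Theory.
Local Open Scope ring_scope.

Section PsdMatrices.
Variable F : numClosedFieldType.

Lemma adjmxE m n (M : 'M[F]_(m, n)) i j : adjmx M i j = (M j i)^*.
Proof. by rewrite /adjmx mxE mxE. Qed.

Lemma adjmxK m n (M : 'M[F]_(m, n)) : adjmx (adjmx M) = M.
Proof. by apply/matrixP => i j; rewrite !adjmxE conjCK. Qed.

Lemma adjmxM m n p (A : 'M[F]_(m, n)) (B : 'M[F]_(n, p)) :
  adjmx (A *m B) = adjmx B *m adjmx A.
Proof.
apply/matrixP => i j; rewrite adjmxE !mxE rmorph_sum; apply: eq_bigr => k _.
by rewrite !adjmxE rmorphM mulrC.
Qed.

Lemma adjmx_formE n (v : 'rV[F]_n) : (v *m adjmx v) 0 0 = \sum_p `|v 0 p| ^+ 2.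
Proof. by rewrite mxE; apply: eq_bigr => p _; rewrite adjmxE normCK. Qed.

Lemma adjmx_form_ge0 n (v : 'rV[F]_n) : 0 <= (v *m adjmx v) 0 0.
Proof. by rewrite adjmx_formE; apply: sumr_ge0 => p _; apply: exprn_ge0. Qed.

Lemma psdmx_congr m k (M : 'M[F]_m) (T : 'M[F]_(m, k)) :
  psdmx M -> psdmx (adjmx T *m M *m T).
Proof.
move=> [hM pM]; split; first by rewrite !adjmxM adjmxK hM mulmxA.
by move=> v; have := pM (v *m adjmx T); rewrite adjmxM adjmxK !mulmxA.
Qed.

(* Congruence by the matrix with entries [g r] at positions [(f r, r)]. *)
Lemma psdmx_reindex_scale m k (M : 'M[F]_m) (f : 'I_k -> 'I_m) (g : 'I_k -> F) :
  psdmx M -> psdmx (\matrix_(r, s) ((g r)^* * g s * M (f r) (f s))).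
Proof.
move=> /(psdmx_congr (\matrix_(u, r) (g r * (u == f r)%:R))); congr psdmx.
apply/matrixP => r s; rewrite !mxE (bigD1 (f s)) //= big1 ?addr0; last first.
  by move=> u /negbTE hu; rewrite mxE hu mulr0 mulr0.
rewrite [X in _ * X]mxE eqxx mulr1 mxE (bigD1 (f r)) //= big1 ?addr0; last first.
  by move=> u /negbTE hu; rewrite adjmxE mxE hu mulr0 rmorph0 mul0r.
by rewrite adjmxE mxE eqxx mulr1 -!mulrA [_ * g s]mulrC.
Qed.

Lemma psdmx_reindex m k (M : 'M[F]_m) (f : 'I_k -> 'I_m) :
  psdmx M -> psdmx (\matrix_(r, s) M (f r) (f s)).
Proof.
move=> /(psdmx_reindex_scale f (fun _ => 1)); congr psdmx.
by apply/matrixP => r s; rewrite !mxE rmorph1 !mul1r.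
Qed.

Lemma psdmx0 n : psdmx (0 : 'M[F]_n).
Proof.
split; first by apply/matrixP => i j; rewrite adjmxE !mxE rmorph0.
by move=> v; rewrite mulmx0 mul0mx mxE.
Qed.

Lemma psdmxD n (A B : 'M[F]_n) : psdmx A -> psdmx B -> psdmx (A + B).
Proof.
move=> [hA pA] [hB pB]; split.
  by apply/matrixP => i j; rewrite adjmxE !mxE rmorphD /= -(adjmxE A) -(adjmxE B) hA hB.
by move=> v; rewrite mulmxDr mulmxDl mxE addr_ge0.
Qed.

Lemma psdmx_sum (T : finType) (P : pred T) n (A : T -> 'M[F]_n) :
  (forall t, P t -> psdmx (A t)) -> psdmx (\sum_(t | P t) A t).
Proof. by move=> h; apply: (big_ind (@psdmx F n)) => //; [exact: psdmx0 | exact: psdmxD]. Qed.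

Lemma psdmxZ n (c : F) (A : 'M[F]_n) : 0 <= c -> psdmx A -> psdmx (c *: A).
Proof.
move=> c0 [hA pA]; split.
  by apply/matrixP => i j; rewrite adjmxE !mxE rmorphM /= geC0_conj // -(adjmxE A) hA.
by move=> v; rewrite -scalemxAr -scalemxAl mxE mulr_ge0.
Qed.

Lemma psdmx1 n : psdmx (1%:M : 'M[F]_n).
Proof.
split; last by move=> v; rewrite mulmx1 adjmx_form_ge0.
apply/matrixP => i j; rewrite adjmxE !mxE eq_sym.
by case: (_ == _); rewrite ?rmorph1 ?rmorph0.
Qed.

Lemma normr_mul_le_form n (v : 'rV[F]_n) p q :
  `|v 0 p| * `|v 0 q| <= (v *m adjmx v) 0 0.
Proof.
have le_form r : `|v 0 r| ^+ 2 <= (v *m adjmx v) 0 0.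
  rewrite adjmx_formE (bigD1 r) //= lerDl.
  by apply: sumr_ge0 => *; apply: exprn_ge0.
case/orP: (real_leVge (normr_real (v 0 p)) (normr_real (v 0 q))) => h.
  by apply: le_trans (le_form q); rewrite expr2 ler_wpM2r.
by apply: le_trans (le_form p); rewrite expr2 ler_wpM2l.
Qed.

Lemma norm_form_le n (a : 'M[F]_n) (v : 'rV[F]_n) :
  `|(v *m a *m adjmx v) 0 0| <= (\sum_p \sum_q `|a p q|) * (v *m adjmx v) 0 0.
Proof.
rewrite mxE mulr_suml.
under [X in _ <= X]eq_bigr do rewrite mulr_suml.
rewrite exchange_big /=; apply: le_trans (ler_norm_sum _ _ _) _.
apply: ler_sum => q _; rewrite mxE adjmxE normrM norm_conjC.
apply: le_trans (ler_wpM2r (normr_ge0 _) (ler_norm_sum _ _ _)) _.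
rewrite mulr_suml; apply: ler_sum => p _.
rewrite normrM [`|v 0 p| * _]mulrC -mulrA; apply: ler_wpM2l => //.
exact: normr_mul_le_form.
Qed.

Lemma psdmx_scalar_sub n (a : 'M[F]_n) (c : F) :
  psdmx a -> \sum_p \sum_q `|a p q| <= c -> psdmx (c *: 1%:M - a).
Proof.
move=> [ha pa] hc.
have c0 : 0 <= c by apply: le_trans hc; do 2!(apply: sumr_ge0 => ? _).
split.
  apply/matrixP => i j; rewrite adjmxE !mxE rmorphB /= rmorphM /= geC0_conj //.
  rewrite -(adjmxE a) ha eq_sym; congr (_ * _ - _).
  by case: (_ == _); rewrite /= ?rmorph1 ?rmorph0.
move=> v; rewrite scalemx1 mulmxBr mul_mx_scalar mulmxBl -scalemxAl.
rewrite [X in 0 <= X]mxE [X in 0 <= _ + X]mxE [X in 0 <= X + _]mxE subr_ge0.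
rewrite -(ger0_norm (pa v)); apply: le_trans (norm_form_le a v) _.
by rewrite ler_wpM2r // adjmx_form_ge0.
Qed.

End PsdMatrices.

Section Multimatrices.
Variable F : numClosedFieldType.

Lemma unidxK m n (a : 'I_m) (p : 'I_n) : unidx (mxvec_index a p) = (a, p).
Proof. by rewrite /unidx /mxvec_index cast_ordK enum_rankK. Qed.

Lemma mm_linear_comp (I J K : finType) (dA : I -> nat) (dB : J -> nat)
  (dC : K -> nat) (f : mm F dB -> mm F dC) (g : mm F dA -> mm F dB) :
  mm_linear f -> mm_linear g -> mm_linear (fun X => f (g X)).
Proof.
move=> lin_f lin_g a X Y k.
have -> : g (fun i => a *: X i + Y i) = fun j => a *: g X j + g Y j.
  by apply: functional_extensionality_dep => j; apply: lin_g.
exact: lin_f.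
Qed.

Lemma ampl_comp (I J K : finType) (dA : I -> nat) (dB : J -> nat) (dC : K -> nat)
  (f : mm F dB -> mm F dC) (g : mm F dA -> mm F dB) n (X : mm F (fun i => n * dA i)) :
  ampl f (ampl g X) = ampl (fun Z => f (g Z)) X.
Proof.
apply: functional_extensionality_dep => k; apply/matrixP => r s; rewrite !mxE.
have -> : blk (ampl g X) (unidx r).1 (unidx s).1 = g (blk X (unidx r).1 (unidx s).1) => //.
apply: functional_extensionality_dep => j; apply/matrixP => p q.
by rewrite !mxE !unidxK.
Qed.

Lemma mm_cp_comp (I J K : finType) (dA : I -> nat) (dB : J -> nat)
  (dC : K -> nat) (f : mm F dB -> mm F dC) (g : mm F dA -> mm F dB) :
  mm_cp f -> mm_cp g -> mm_cp (fun X => f (g X)).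
Proof. by move=> cp_f cp_g n X hX; rewrite -ampl_comp; apply/cp_f/cp_g. Qed.

Lemma ptrace1E m n (M : 'M[F]_(m * n)) :
  ptrace1 M = \sum_(x < m) \matrix_(p, q) M (mxvec_index x p) (mxvec_index x q).
Proof. by apply/matrixP => p q; rewrite summxE !mxE; apply: eq_bigr => x _; rewrite mxE. Qed.

Lemma psdmx_ptrace1 m n (M : 'M[F]_(m * n)) : psdmx M -> psdmx (ptrace1 M).
Proof. by move=> hM; rewrite ptrace1E; apply: psdmx_sum => x _; apply: psdmx_reindex. Qed.

Lemma ptrace1_linear m n (s : F) (A B : 'M[F]_(m * n)) :
  ptrace1 (s *: A + B) = s *: ptrace1 A + ptrace1 B.
Proof.
apply/matrixP => p q; rewrite !mxE mulr_sumr -big_split /=.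
by apply: eq_bigr => x _; rewrite !mxE.
Qed.

Variables (I J : finType) (dH : I -> nat) (dK : J -> nat).

Lemma trout_linear : mm_linear (@trout F I J dH dK).
Proof.
move=> s X Y i; rewrite /trout scaler_sumr -big_split /=.
by apply: eq_bigr => j _; rewrite ptrace1_linear.
Qed.

Lemma trout_pos (X : mm F (homd dH dK)) : mm_pos X -> mm_pos (trout X).
Proof.
by move=> hX i; apply: psdmx_sum => j _; exact: (@psdmx_ptrace1 (dK j) (dH i) _ (hX (j, i))).
Qed.

Lemma trout_cp : mm_cp (@trout F I J dH dK).
Proof.
move=> n Y hY i.
have -> : ampl (@trout F I J dH dK) Y i =
  \sum_j \sum_(x < dK j) \matrix_(r < n * dH i, s < n * dH i)
     (Y (j, i) : 'M[F]_(n * (dK j * dH i)))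
       (mxvec_index (unidx r).1 (mxvec_index x (unidx r).2))
       (mxvec_index (unidx s).1 (mxvec_index x (unidx s).2)).
  apply/matrixP => r s; rewrite mxE summxE /trout summxE; apply: eq_bigr => j _.
  by rewrite summxE mxE; apply: eq_bigr => x _; rewrite !mxE.
apply: psdmx_sum => j _; apply: psdmx_sum => x _.
exact: (@psdmx_reindex F (n * (dK j * dH i)) (n * dH i) (Y (j, i)) _ (hY (j, i))).
Qed.

(* [out_embed j0 a] puts [a i (x) e_0 e_0^*] in the block [(j0, i)] and [0]
   in the blocks [(j, i)] with [j != j0]. *)
Variable j0 : J.

Definition out_weight j n (x : 'I_n) : F := ((j == j0) && (val x == 0%N))%:R.

Definition out_embed (a : mm F dH) : mm F (homd dH dK) :=
  fun t => \matrix_(r, s) (out_weight t.1 (unidx r).1 * out_weight t.1 (unidx s).1 *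
                           a t.2 (unidx r).2 (unidx s).2).

Lemma out_embed_linear : mm_linear out_embed.
Proof. by move=> s X Y t; apply/matrixP => r q; rewrite !mxE; ring. Qed.

Lemma out_embed_pos (a : mm F dH) : mm_pos a -> mm_pos (out_embed a).
Proof.
move=> ha t; have := psdmx_reindex_scale (fun r : 'I_(dK t.1 * dH t.2) => (unidx r).2)
   (fun r => out_weight t.1 (unidx r).1) (ha t.2).
by congr psdmx; apply/matrixP => r s; rewrite !mxE conjC_nat.
Qed.

Lemma out_embed_cp : mm_cp out_embed.
Proof.
move=> n X hX t.
have := psdmx_reindex_scale
   (fun r : 'I_(n * (dK t.1 * dH t.2)) => mxvec_index (unidx r).1 (unidx (unidx r).2).2)
   (fun r => out_weight t.1 (unidx (unidx r).2).1) (hX t.2).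
by congr psdmx; apply/matrixP => r s; rewrite !mxE conjC_nat.
Qed.

Lemma trout_out_embed (a : mm F dH) i : (0 < dK j0)%N -> trout (out_embed a) i = a i.
Proof.
move=> dK_gt0; apply/matrixP => p q.
rewrite /trout summxE (bigD1 j0) //= big1 ?addr0; last first.
  move=> j hj; rewrite mxE big1 // => x _.
  by rewrite mxE /out_weight /= (negbTE hj) /= !mul0r.
rewrite mxE (bigD1 (Ordinal dK_gt0)) //= big1 ?addr0; last first.
  move=> x hx; rewrite mxE unidxK /out_weight eqxx /=.
  have -> : (val x == 0%N) = false.
    by apply/negbTE; apply: contra hx => /eqP h; apply/eqP/val_inj.
  by rewrite !mul0r.
by rewrite mxE !unidxK /out_weight eqxx /= !mul1r.
Qed.

End Multimatrices.

Lemma exists_mm_pos_one_subZ (F : numClosedFieldType) (I : finType) (d : I -> nat)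
  (a : mm F d) : mm_pos a -> exists2 c : F, 0 < c & mm_pos (fun i => 1%:M - c *: a i).
Proof.
move=> ha; pose s i := \sum_p \sum_q `|a i p q|.
have s_ge0 i : 0 <= s i by do 2!(apply: sumr_ge0 => ? _).
pose c : F := 1 + \sum_i s i.
have c_gt0 : 0 < c by rewrite ltr_wpDr // sumr_ge0.
exists c^-1; first by rewrite invr_gt0.
move=> i; have -> : 1%:M - c^-1 *: a i = c^-1 *: (c *: 1%:M - a i).
  by rewrite scalerBr scalerA mulVf ?gt_eqF // scale1r.
apply: psdmxZ; first by rewrite invr_ge0 ltW.
apply: psdmx_scalar_sub => //; apply: (@ler_wpDl _ (s i)) => //.
by rewrite (bigD1 i) //= lerDl sumr_ge0.
Qed.

Section DeterministicSupermap.
Variables (F : numClosedFieldType) (I J K L : finType).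
Variables (dHin : I -> nat) (dHout : J -> nat) (dKin : K -> nat) (dKout : L -> nat).
Variable S : mm F (homd dHin dHout) -> mm F (homd dKin dKout).
Hypothesis HS : det_supermap S.

Lemma det_supermap_trout_eq (X Y W : mm F (homd dHin dHout)) (c : F) :
  mm_pos X -> mm_pos Y -> mm_pos W -> 0 < c ->
  (forall i, c *: trout X i + trout W i = 1%:M) -> (forall i, trout Y i = trout X i) ->
  forall k, trout (S Y) k = trout (S X) k.
Proof.
case: HS => lin_S _ tp_S posX posY posW c_gt0 trXW trYX k.
have lin := mm_linear_comp (@trout_linear F K L dKin dKout) lin_S.
have tp_shift Z : mm_pos Z -> (forall i, trout Z i = trout X i) ->
    trout (S (fun t => c *: Z t + W t)) k = 1%:M.
  move=> posZ trZX; apply: tp_S => [t|i]; first by apply/psdmxD/posW/psdmxZ/posZ/ltW.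
  by rewrite trout_linear trZX trXW.
have := tp_shift Y posY trYX; rewrite -(tp_shift X posX (fun=> erefl)) !lin.
move=> /addIr /(congr1 (fun M => c^-1 *: M)).
by rewrite !scalerA mulVf ?gt_eqF // !scale1r.
Qed.

End DeterministicSupermap.

Theorem lemma3p4 (F : numClosedFieldType) (I J K L : finType)
  (dHin : I -> nat) (dHout : J -> nat) (dKin : K -> nat) (dKout : L -> nat)
  (hI : (0 < #|I|)%N) (hJ : (0 < #|J|)%N) (hK : (0 < #|K|)%N) (hL : (0 < #|L|)%N)
  (hdHin : forall i, (0 < dHin i)%N) (hdHout : forall j, (0 < dHout j)%N)
  (hdKin : forall k, (0 < dKin k)%N) (hdKout : forall l, (0 < dKout l)%N)
  (S : mm F (homd dHin dHout) -> mm F (homd dKin dKout)) :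
  det_supermap S ->
  exists N : mm F dHin -> mm F dKin,
    [/\ mm_linear N, mm_cp N, mm_unital N &
        forall X : mm F (homd dHin dHout), mm_pos X ->
          forall k : K, trout (S X) k = N (trout X) k].
Proof.
move=> HS; have [lin_S cp_S tp_S] := HS.
pose j0 : J := enum_val (Ordinal hJ).
pose E := @out_embed F I J dHin dHout j0.
have trE a i : trout (E a) i = a i by apply: trout_out_embed.
exists (fun a => trout (S (E a))); split.
- apply: (@mm_linear_comp _ _ _ _ _ _ _ (fun Z => trout (S Z)) E).
    exact: mm_linear_comp (@trout_linear F K L dKin dKout) lin_S.
  exact: out_embed_linear.
- apply: (@mm_cp_comp _ _ _ _ _ _ _ (fun Z => trout (S Z)) E).
    exact: mm_cp_comp (@trout_cp F K L dKin dKout) cp_S.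
  exact: out_embed_cp.
- by move=> k; apply: tp_S => [|i]; [apply/out_embed_pos => i; apply: psdmx1 | rewrite trE].
move=> X posX k; have posA := trout_pos posX.
have [c c_gt0 posB] := exists_mm_pos_one_subZ posA.
have trW i : c *: trout X i + trout (E (fun i => 1%:M - c *: trout X i)) i = 1%:M.
  by rewrite trE addrC subrK.
exact/esym/(det_supermap_trout_eq HS posX (out_embed_pos dHout j0 posA)
  (out_embed_pos dHout j0 posB) c_gt0 trW (trE _)).
Qed.
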